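(* Let $A$ be the bilinear form on $V_{\vec\lambda}\times V_{\vec\lambda}$ defined by \[ A((\vec\lambda,\vec\phi),(\vec\mu,\vec\psi))=-\sum_{\mathfrak n\in\mathcal N\setminus\mathcal N_{\mathrm D}}\Big[[\![\vec N_{\mathfrak e}(\vec\lambda_{\mathfrak n},\vec\phi_{\mathfrak n})\nu_{\mathfrak e}]\!]_{\mathfrak n}\cdot\vec\mu_{\mathfrak n}+[\![\vec M_{\mathfrak e}(\vec\lambda_{\mathfrak n},\vec\phi_{\mathfrak n})\nu_{\mathfrak e}]\!]_{\mathfrak n}\cdot\vec\psi_{\mathfrak n}\Big]. \] Then for all $(\vec\lambda,\vec\phi),(\vec\mu,\vec\psi)\in V_{\vec\lambda}\times V_{\vec\lambda}$, \[ A((\vec\lambda,\vec\phi),(\vec\mu,\vec\psi))=\sum_{\mathfrak e\in\mathcal E}\Big[(C_{\vec n}^{-1}\vec N_{\mathfrak e}(\vec\lambda_{\mathfrak n},\vec\phi_{\mathfrak n}),\vec N_{\mathfrak e}(\vec\mu_{\mathfrak n},\vec\psi_{\mathfrak n}))_{\mathfrak e}+(C_{\vec m}^{-1}\vec M_{\mathfrak e}(\vec\lambda_{\mathfrak n},\vec\phi_{\mathfrak n}),\vec M_{\mathfrak e}(\vec\mu_{\mathfrak n},\vec\psi_{\mathfrak n}))_{\mathfrak e}\Big]. \] Consequently $A$ is symmetric and positive definite on $V_{\vec\lambda}\times V_{\vec\lambda}$, and for every linear functional $F$ on $V_{\vec\lambda}\times V_{\vec\lambda}$ the problem of finding $(\vec\lambda,\vec\phi)\in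 V_{\vec\lambda}\times V_{\vec\lambda}$ with $A((\vec\lambda,\vec\phi),(\vec\mu,\vec\psi))=F((\vec\mu,\vec\psi))$ for all $(\vec\mu,\vec\psi)\in V_{\vec\lambda}\times V_{\vec\lambda}$ has a unique solution.
   Context: $\mathcal G=(\mathcal N,\mathcal E)$ is a finite connected graph embedded in $\mathbb R^3$: nodes are distinct points of $\mathbb R^3$, each edge $\mathfrak e$ is the straight segment joining two distinct nodes $\mathfrak n_k,\mathfrak n_\ell$ ($k<\ell$), with length $h_{\mathfrak e}=|\mathfrak n_\ell-\mathfrak n_k|$, direction $\vec i_{\mathfrak e}=(\mathfrak n_\ell-\mathfrak n_k)/h_{\mathfrak e}$, and scalar normals $\nu_{\mathfrak e}(\mathfrak n_k)=-1$, $\nu_{\mathfrak e}(\mathfrak n_\ell)=+1$; $\mathfrak n\sim\mathfrak e$ means $\mathfrak n$ is an endpoint of $\mathfrak e$. On each edge, $x$ is the arclength coordinate increasing in direction $\vec i_{\mathfrak e}$, $\partial_x$ its derivative, $\times$ the cross product. $C_{\vec n},C_{\vec m}$ are symmetric $\mathbb R^{3\times3}$-valued functions on the edges with uniform bounds $\alpha_{\vec n}|\xi|^2\le (C_{\vec n}\xi)\cdot\xi\le\beta_{\vec n}|\xi|^2$, $\alpha_{\vec m}|\xi|^2\le (C_{\vec m}\xi)\cdot\xi\le\beta_{\vec m}|\xi|^2$ for constants $0<\alpha,\beta<\infty$. Notation: $(\vec v,\vec w)_{\mathfrak e}=\int_{\mathfrak e}\vec v\cdot\vec w\,\mathrm d\sigma$;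 $\langle\vec p,\vec q\rangle_{\mathfrak e}=\sum_{\mathfrak n\sim\mathfrak e}\vec p(\mathfrak n)\cdot\vec q(\mathfrak n)$, also applied to nodal quantities. Local solver: for an edge $\mathfrak e$, nodal data $\vec u_{\mathfrak n},\vec r_{\mathfrak n}\in\mathbb R^3$ at its two endpoints, and $\vec f_{\mathfrak e},\vec g_{\mathfrak e}\in(L^2(\mathfrak e))^3$, there is a unique $\vec u_{\mathfrak e},\vec r_{\mathfrak e}\in(L^2(\mathfrak e))^3$, $\vec n_{\mathfrak e},\vec m_{\mathfrak e}\in(H^1(\mathfrak e))^3$ with, for all $\vec p,\vec q\in(H^1(\mathfrak e))^3$, $\vec v,\vec w\in(L^2(\mathfrak e))^3$: $-(C_{\vec n}^{-1}\vec n_{\mathfrak e},\vec p)_{\mathfrak e}+(\vec u_{\mathfrak e},\partial_x\vec p)_{\mathfrak e}-(\vec i_{\mathfrak e}\times\vec r_{\mathfrak e},\vec p)_{\mathfrak e}=\langle\vec u_{\mathfrak n},\vec p\,\nu_{\mathfrak e}\rangle_{\mathfrak e}$; $-(C_{\vec m}^{-1}\vec m_{\mathfrak e},\vec q)_{\mathfrak e}+(\vec r_{\mathfrak e},\partial_x\vec q)_{\mathfrak e}=\langle\vec r_{\mathfrak n},\vec q\,\nu_{\mathfrak e}\rangle_{\mathfrak e}$; $(\partial_x\vec n_{\mathfrak e},\vec v)_{\mathfrak e}=(\vec f_{\mathfrak e},\vec v)_{\mathfrak e}$; $(\vec i_{\mathfrak e}\times\vec n_{\mathfrak e},\vec w)_{\mathfrak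 e}+(\partial_x\vec m_{\mathfrak e},\vec w)_{\mathfrak e}=(\vec g_{\mathfrak e},\vec w)_{\mathfrak e}$. With $\vec f_{\mathfrak e}=\vec g_{\mathfrak e}=0$, write $\vec N_{\mathfrak e}(\vec u_{\mathfrak n},\vec r_{\mathfrak n})=\vec n_{\mathfrak e}$ and $\vec M_{\mathfrak e}(\vec u_{\mathfrak n},\vec r_{\mathfrak n})=\vec m_{\mathfrak e}$ (the argument meaning the data at both endpoints of $\mathfrak e$). A nonempty set $\mathcal N_{\mathrm D}\subset\mathcal N$ of Dirichlet nodes is fixed, and $V_{\vec\lambda}$ is the space of maps $\vec\lambda:\mathcal N\to\mathbb R^3$, $\mathfrak n\mapsto\vec\lambda_{\mathfrak n}$, with $\vec\lambda_{\mathfrak n}=0$ for $\mathfrak n\in\mathcal N_{\mathrm D}$. For edge quantities $q_{\mathfrak e}$ with values at endpoints, $[\![q_{\mathfrak e}]\!]_{\mathfrak n}=\sum_{\mathfrak e\sim\mathfrak n}q_{\mathfrak e}(\mathfrak n)$ (sum over edges adjacent to $\mathfrak n$, with $\nu_{\mathfrak e}$ evaluated at $\mathfrak n$). *)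

From HB Require Import structures.
From mathcomp Require Import all_boot all_order all_algebra.
From mathcomp Require Import all_classical all_reals all_analysis.
Set Implicit Arguments. Unset Strict Implicit. Unset Printing Implicit Defensive.
Import Order.TTheory GRing.Theory Num.Theory.
Import numFieldNormedType.Exports.
Local Open Scope classical_set_scope.
Local Open Scope ring_scope.

Definition dotv {R : realType} (u v : 'cV[R]_3) : R := \sum_(i < 3) u i 0 * v i 0.
Definition normv {R : realType} (u : 'cV[R]_3) : R := Num.sqrt (dotv u u).

Definition o0 : 'I_3 := @Ordinal 3 0 isT.
Definition o1 : 'I_3 := @Ordinal 3 1 isT.
Definition o2 : 'I_3 := @Ordinal 3 2 isT.

Definition crossv {R : realType} (u v : 'cV[R]_3) : 'cV[R]_3 :=
  \col_(i < 3)
    (if val i == 0%N then u o1 0 * v o2 0 - u o2 0 * v o1 0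
     else if val i == 1%N then u o2 0 * v o0 0 - u o0 0 * v o2 0
     else u o0 0 * v o1 0 - u o1 0 * v o0 0).

Definition edge_dom {R : realType} (h : R) : set R := `[0, h]%classic.

Definition L2 {R : realType} (h : R) (v : R -> 'cV[R]_3) : Prop :=
  forall i : 'I_3,
    measurable_fun (edge_dom h) (fun x => v x i 0) /\
    (\int[@lebesgue_measure R]_(x in edge_dom h) ((v x i 0) ^+ 2)%:E < +oo)%E.

(* (H^1(e))^3 : p (its absolutely continuous representative) together with its
   weak derivative dp = ∂_x p : p in L^2, dp in L^2, and p(x) = p(0) + ∫_0^x dp *)
Definition H1 {R : realType} (h : R) (p dp : R -> 'cV[R]_3) : Prop :=
  L2 h p /\ L2 h dp /\
  forall x : R, 0 <= x <= h -> forall i : 'I_3,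
    p x i 0 = p 0 i 0 + \int[@lebesgue_measure R]_(t in `[0, x]%classic) dp t i 0.

Definition ip {R : realType} (h : R) (v w : R -> 'cV[R]_3) : R :=
  \int[@lebesgue_measure R]_(x in edge_dom h) dotv (v x) (w x).

(* <p, q nu>_e with endpoint x=0 (node n_k, nu=-1) and x=h (node n_l, nu=+1);
   pa, pb are the nodal values at n_k, n_l *)
Definition bnd {R : realType} (h : R) (pa pb : 'cV[R]_3) (q : R -> 'cV[R]_3) : R :=
  - dotv pa (q 0) + dotv pb (q h).

(* the local problem on an edge of length h, direction i_e = dir,
   coefficient fields Cn, Cm, nodal data (ua,ub) for u and (ra,rb) for r,
   right-hand sides f, g; dn, dm are the weak derivatives of n, m *)
Definition local_solution {R : realType} (h : R) (dir : 'cV[R]_3)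
  (Cn Cm : R -> 'M[R]_3) (ua ub ra rb : 'cV[R]_3) (f g : R -> 'cV[R]_3)
  (u r n m dn dm : R -> 'cV[R]_3) : Prop :=
  [/\ L2 h u, L2 h r, H1 h n dn & H1 h m dm] /\
  [/\
   (forall p dp, H1 h p dp ->
      - ip h (fun x => invmx (Cn x) *m n x) p + ip h u dp
      - ip h (fun x => crossv dir (r x)) p = bnd h ua ub p),
   (forall q dq, H1 h q dq ->
      - ip h (fun x => invmx (Cm x) *m m x) q + ip h r dq = bnd h ra rb q),
   (forall v, L2 h v -> ip h dn v = ip h f v) &
   (forall w, L2 h w ->
      ip h (fun x => crossv dir (n x)) w + ip h dm w = ip h g w)].

(* nodes are 'I_nN (positions pos), an edge e joins ea e (= n_k) to eb e (= n_l), k < l *)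
Definition edge_len {R : realType} {nN : nat} {E : finType}
  (pos : 'I_nN -> 'cV[R]_3) (ea eb : E -> 'I_nN) (e : E) : R :=
  normv (pos (eb e) - pos (ea e)).

Definition edge_dir {R : realType} {nN : nat} {E : finType}
  (pos : 'I_nN -> 'cV[R]_3) (ea eb : E -> 'I_nN) (e : E) : 'cV[R]_3 :=
  (edge_len pos ea eb e)^-1 *: (pos (eb e) - pos (ea e)).

Definition adjacent {nN : nat} {E : finType} (ea eb : E -> 'I_nN) : rel 'I_nN :=
  fun x y => [exists e, ((ea e == x) && (eb e == y)) || ((ea e == y) && (eb e == x))].

Definition graph_connected {nN : nat} {E : finType} (ea eb : E -> 'I_nN) : Prop :=
  forall x y, connect (adjacent ea eb) x y.

Definition jump {R : realType} {nN : nat} {E : finType}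
  (ea eb : E -> 'I_nN) (h : E -> R) (q : E -> R -> 'cV[R]_3) (nd : 'I_nN) : 'cV[R]_3 :=
  \sum_(e | ea e == nd) (- q e 0) + \sum_(e | eb e == nd) q e (h e).

Definition inVl {R : realType} {nN : nat} (ND : {set 'I_nN}) (lam : 'I_nN -> 'cV[R]_3) : Prop :=
  forall nd, nd \in ND -> lam nd = 0.

(* local solver outputs N_e, M_e as functions of the endpoint data
   (u at n_k, u at n_l, r at n_k, r at n_l) *)
Definition edge_op (R : realType) (E : finType) :=
  E -> 'cV[R]_3 -> 'cV[R]_3 -> 'cV[R]_3 -> 'cV[R]_3 -> R -> 'cV[R]_3.

Definition at_edge {R : realType} {nN : nat} {E : finType} (ea eb : E -> 'I_nN)
  (N : edge_op R E) (lam phi : 'I_nN -> 'cV[R]_3) : E -> R -> 'cV[R]_3 :=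
  fun e => N e (lam (ea e)) (lam (eb e)) (phi (ea e)) (phi (eb e)).

Definition Aform {R : realType} {nN : nat} {E : finType}
  (pos : 'I_nN -> 'cV[R]_3) (ea eb : E -> 'I_nN) (ND : {set 'I_nN})
  (N M : edge_op R E) (lam phi mu psi : 'I_nN -> 'cV[R]_3) : R :=
  - \sum_(nd | nd \notin ND)
      (dotv (jump ea eb (edge_len pos ea eb) (at_edge ea eb N lam phi) nd) (mu nd)
     + dotv (jump ea eb (edge_len pos ea eb) (at_edge ea eb M lam phi) nd) (psi nd)).

From Pilot Require Import Defs.
From HB Require Import structures.
From mathcomp Require Import all_boot all_order all_algebra.
From mathcomp Require Import all_classical all_reals all_analysis.
From mathcomp Require Import ring lra.
Import Order.TTheory GRing.Theory Num.Theory.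
Import numFieldNormedType.Exports.
Local Open Scope classical_set_scope.
Local Open Scope ring_scope.
Set Implicit Arguments. Unset Strict Implicit. Unset Printing Implicit Defensive.

(* Testing the local equations of one edge solution with the fluxes of another
   (Green's formula on the edge) turns the endpoint terms into the energy
   (C_n^-1 n, n') + (C_m^-1 m, m'), while summation by parts over the graph turns
   the nodal jumps in A into these endpoint terms: this is the energy identity,
   and symmetry follows.  Since C^-1 is coercive whenever C is, the energy is
   nonnegative; if it vanishes, n and m vanish on every edge, which (testing with
   constant and linear fields) forces phi and then lam to take equal values at
   both ends of every edge, hence to vanish by connectedness and a Dirichlet node.
   Finally, a symmetric positive definite form on the finite-dimensional space
   V_lambda x V_lambda has an invertible Gram matrix in coordinates, so it
   represents every linear functional. *)

Section DotProduct.
Context {R : realType}.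
Implicit Types (u v w : 'cV[R]_3).

Lemma dotvE u v : dotv u v = u o0 0 * v o0 0 + u o1 0 * v o1 0 + u o2 0 * v o2 0.
Proof.
rewrite /dotv !big_ord_recr big_ord0 /= add0r.
by congr (u _ 0 * v _ 0 + u _ 0 * v _ 0 + u _ 0 * v _ 0); apply: val_inj.
Qed.

Lemma dotvC u v : dotv u v = dotv v u.
Proof. by apply: eq_bigr => i _; rewrite mulrC. Qed.

Lemma dotvDl u v w : dotv (u + v) w = dotv u w + dotv v w.
Proof. by rewrite /dotv -big_split; apply: eq_bigr => i _; rewrite mxE mulrDl. Qed.

Lemma dotvDr u v w : dotv u (v + w) = dotv u v + dotv u w.
Proof. by rewrite dotvC dotvDl !(dotvC u). Qed.

Lemma dotvZl (a : R) u v : dotv (a *: u) v = a * dotv u v.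
Proof. by rewrite /dotv mulr_sumr; apply: eq_bigr => i _; rewrite mxE mulrA. Qed.

Lemma dotvZr (a : R) u v : dotv u (a *: v) = a * dotv u v.
Proof. by rewrite dotvC dotvZl dotvC. Qed.

Lemma dotvNl u v : dotv (- u) v = - dotv u v.
Proof. by rewrite -scaleN1r dotvZl mulN1r. Qed.

Lemma dotvBl u v w : dotv (u - v) w = dotv u w - dotv v w.
Proof. by rewrite dotvDl dotvNl. Qed.

Lemma dotvBr u v w : dotv u (v - w) = dotv u v - dotv u w.
Proof. by rewrite dotvC dotvBl !(dotvC u). Qed.

Lemma dotv0l v : dotv 0 v = 0.
Proof. by rewrite -(scale0r 0) dotvZl mul0r. Qed.

Lemma dotv0r v : dotv v 0 = 0.
Proof. by rewrite dotvC dotv0l. Qed.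

Lemma dotv_suml (I : finType) (P : pred I) (F : I -> 'cV[R]_3) v :
  dotv (\sum_(i | P i) F i) v = \sum_(i | P i) dotv (F i) v.
Proof. by elim/big_rec2: _ => [|i x y _ <-]; rewrite ?dotv0l ?dotvDl. Qed.

Lemma dotv_delta u i : dotv u (delta_mx i 0) = u i 0.
Proof.
rewrite /dotv (bigD1 i) //= big1 => [|j ji]; last by rewrite mxE (negbTE ji) mulr0.
by rewrite mxE !eqxx mulr1 addr0.
Qed.

Lemma dotv_ge0 u : 0 <= dotv u u.
Proof. by rewrite sumr_ge0 // => i _; rewrite -expr2 sqr_ge0. Qed.

Lemma dotv_eq0 u : (dotv u u == 0) = (u == 0).
Proof.
apply/idP/eqP => [|->]; last by rewrite dotv0l.
rewrite psumr_eq0 => [/allP u0|i _]; last by rewrite -expr2 sqr_ge0.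
apply/matrixP => i j; rewrite (ord1 j) mxE.
by have /u0 := mem_index_enum i; rewrite mulf_eq0 orbb => /eqP.
Qed.

Lemma dotv_gt0 u : (0 < dotv u u) = (u != 0).
Proof. by rewrite lt_def dotv_ge0 dotv_eq0 andbT. Qed.

Lemma dotv_mulmx (C : 'M[R]_3) u v : dotv (C *m u) v = dotv u (C^T *m v).
Proof.
rewrite /dotv; under eq_bigr do rewrite mxE big_distrl /=.
rewrite exchange_big /=; apply: eq_bigr => j _.
by rewrite mxE big_distrr /=; apply: eq_bigr => i _; rewrite mxE mulrCA mulrA.
Qed.

Lemma crossvr0 u : crossv u 0 = 0.
Proof.
by apply/matrixP => i j; rewrite !mxE !mulr0 subrr; case: ifP => //; case: ifP.
Qed.

Lemma dotv_crossv_swap (d a b : 'cV[R]_3) :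
  dotv (crossv d a) b = - dotv (crossv d b) a.
Proof. by rewrite !dotvE !mxE /=; ring. Qed.

End DotProduct.

Section CoerciveMatrix.
Context {R : realType}.

Definition coercive (a b : R) (C : 'M[R]_3) : Prop :=
  C^T = C /\ forall xi, a * dotv xi xi <= dotv (C *m xi) xi <= b * dotv xi xi.

Variables (a b : R) (C : 'M[R]_3).
Hypotheses (a_gt0 : 0 < a) (b_gt0 : 0 < b) (C_coer : coercive a b C).

Lemma coercive_unitmx : C \in unitmx.
Proof.
case: C_coer => C_sym C_bnd; rewrite unitmxE unitfE.
apply/negP => /det0P [v /negP v_neq0 vC]; apply: v_neq0.
have Cv : C *m v^T = 0 by rewrite -C_sym -trmx_mul vC trmx0.
have /andP[+ _] := C_bnd v^T; rewrite Cv dotv0l pmulr_rle0 // => vv_le0.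
have /eqP vT0 : v^T == 0 by rewrite -dotv_eq0 eq_le vv_le0 dotv_ge0.
by rewrite -[v]trmxK vT0 trmx0.
Qed.

Lemma coercive_invmx : coercive b^-1 a^-1 (invmx C).
Proof.
case: C_coer => C_sym C_bnd; split; first by rewrite trmx_inv C_sym.
move=> xi; set eta := invmx C *m xi; set s := dotv eta xi.
have C_eta : C *m eta = xi by rewrite mulmxA mulmxV ?mul1mx ?coercive_unitmx.
have /andP[s_ge _] := C_bnd eta; rewrite C_eta (dotvC xi eta) -/s in s_ge.
(* [0 <= |xi - a eta|^2] gives [a s <= |xi|^2], and [0 <= (C w, w)] for
   [w = xi - b eta] gives [|xi|^2 <= b s] *)
have := dotv_ge0 (xi - a *: eta).
rewrite !dotvBl !dotvBr !dotvZl !dotvZr (dotvC xi eta) -/s => xi_a.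
have Cw : dotv (C *m (xi - b *: eta)) (xi - b *: eta) =
    dotv (C *m xi) xi - 2 * b * dotv xi xi + b ^+ 2 * s.
  rewrite mulmxBr -scalemxAr C_eta !dotvBl !dotvBr !dotvZl !dotvZr.
  rewrite (dotv_mulmx C xi eta) C_sym C_eta (dotvC xi eta) -/s; ring.
have /andP[Cw_ge _] := C_bnd (xi - b *: eta).
have Cw_ge0 := le_trans (mulr_ge0 (ltW a_gt0) (dotv_ge0 _)) Cw_ge.
have /andP[_ Cxi_le] := C_bnd xi.
have b_s : 0 <= b * (b * s - dotv xi xi) by rewrite Cw in Cw_ge0; lra.
have a_s : a * s <= dotv xi xi.
  have : a * (a * dotv eta eta) <= a * s by rewrite ler_pM2l.
  lra.
rewrite !(mulrC _ (dotv xi xi)) ler_pdivrMr // ler_pdivlMr // (mulrC s a) a_s andbT.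
by move: b_s; rewrite pmulr_rge0 // subr_ge0 mulrC.
Qed.

End CoerciveMatrix.

Section Integrals.
Context {R : realType}.
Local Notation mu := (@lebesgue_measure R).

Lemma RintegralN (D : set R) (f : R -> R) :
  \int[mu]_(x in D) - f x = - \int[mu]_(x in D) f x.
Proof.
rewrite /Rintegral (_ : (fun x => (- f x)%:E) = (\- (EFin \o f))%E) //.
set F := EFin \o f.
rewrite [X in fine X = _]integralE [X in _ = - fine X]integralE.
rewrite (_ : (fun x => ((\- F)^\+ x)%E) = (fun x => (F^\- x)%E)); last by rewrite funeposN.
rewrite (_ : (fun x => ((\- F)^\- x)%E) = (fun x => (F^\+ x)%E)); last by rewrite funenegN.
have : (0 <= \int[mu]_(x in D) F^\+ x)%E by apply: integral_ge0 => x _.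
have : (0 <= \int[mu]_(x in D) F^\- x)%E by apply: integral_ge0 => x _.
case: (\int[mu]_(x in D) F^\+ x)%E => [r| |]; case: (\int[mu]_(x in D) F^\- x)%E => [s| |] //=.
all: by rewrite ?opprB ?oppr0.
Qed.

(* [ge0_le_integral] without its measurability hypotheses *)
Lemma ge0_le_integral_sup (D : set R) (f g : R -> \bar R) :
  (forall x, D x -> (0 <= f x)%E) -> (forall x, D x -> (f x <= g x)%E) ->
  (\int[mu]_(x in D) f x <= \int[mu]_(x in D) g x)%E.
Proof.
move=> f_ge0 fg.
have g_ge0 x : D x -> (0 <= g x)%E by move=> Dx; exact: le_trans (f_ge0 x Dx) (fg x Dx).
rewrite (@ge0_integralE _ _ _ mu D f f_ge0) (@ge0_integralE _ _ _ mu D g g_ge0).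
apply: ge_ereal_sup => _ [s sf <-]; apply: ereal_sup_ubound; exists s => // x.
by apply: le_trans (sf x) _; rewrite /patch; case: ifP => // /set_mem /fg.
Qed.

Lemma integral_cst_itv (x c : R) : 0 <= x ->
  (\int[mu]_(t in `[0%R, x]) c%:E = (c * x)%:E)%E.
Proof.
move=> x_ge0; rewrite integral_cst //= lebesgue_measure_itv /= lte_fin.
case: ltP => [_|x_le0]; first by rewrite oppr0 addr0.
by have -> : x = 0 by apply/eqP; rewrite eq_le x_le0 x_ge0.
Qed.

Lemma Rintegral_cst_itv (x c : R) : 0 <= x -> \int[mu]_(t in `[0, x]%classic) c = c * x.
Proof. by move=> x_ge0; rewrite /Rintegral integral_cst_itv. Qed.

Variables (h k K : R) (g : R -> R).
Hypotheses (h_ge0 : 0 <= h) (k_ge0 : 0 <= k).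
Hypothesis g_bnd : forall x, `[0, h]%classic x -> k <= g x <= K.

Lemma integral_itv_bounded : (\int[mu]_(x in `[0%R, h]) (g x)%:E < +oo)%E.
Proof.
rewrite (@le_lt_trans _ _ (K * h)%:E) ?ltry // -integral_cst_itv //.
apply: ge0_le_integral_sup => x /g_bnd /andP[kg gK]; rewrite lee_fin //.
exact: le_trans kg.
Qed.

Lemma Rintegral_itv_ge : k * h <= \int[mu]_(x in `[0, h]%classic) g x.
Proof.
have int_ge : ((k * h)%:E <= \int[mu]_(x in `[0%R, h]) (g x)%:E)%E.
  rewrite -integral_cst_itv //; apply: ge0_le_integral_sup => x /g_bnd /andP[kg _].
    by rewrite lee_fin.
  by rewrite lee_fin.
rewrite -lee_fin /Rintegral fineK // ge0_fin_numE ?integral_itv_bounded //.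
by apply: le_trans int_ge; rewrite lee_fin mulr_ge0.
Qed.

End Integrals.

Section TestFunctions.
Context {R : realType}.
Local Notation mu := (@lebesgue_measure R).
Variable h : R.
Hypothesis h_ge0 : 0 <= h.

Lemma edge_domE x : edge_dom h x = (0 <= x <= h).
Proof. by rewrite /edge_dom /= in_itv. Qed.

Lemma L2_bounded (v : R -> 'cV[R]_3) :
  (forall i, measurable_fun (edge_dom h) (fun x => v x i 0)) ->
  (forall i, exists K, forall x, edge_dom h x -> (v x i 0) ^+ 2 <= K) -> L2 h v.
Proof.
move=> v_meas v_bnd i; split => //; have [K vK] := v_bnd i.
by apply: (@integral_itv_bounded _ h 0 K) => // x Dx; rewrite sqr_ge0 vK.
Qed.

Lemma H1_cst (c : 'cV[R]_3) : H1 h (fun _ => c) (fun _ => 0).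
Proof.
split; [|split].
- by apply: L2_bounded => // i; exists (c i 0 ^+ 2).
- by apply: L2_bounded => // i; exists 0 => x _; rewrite mxE expr0n.
- move=> x /andP[x_ge0 _] i; under eq_Rintegral do rewrite mxE.
  by rewrite Rintegral_cst_itv // mul0r addr0.
Qed.

Lemma H1_linear (w : 'cV[R]_3) : H1 h (fun x => x *: w) (fun _ => w).
Proof.
split; [|split].
- apply: L2_bounded => i.
    rewrite (_ : (fun x => _) = (fun x => x * w i 0)); last by apply: funext => x; rewrite mxE.
    by apply: measurable_realfun.measurable_funM; [exact: measurable_id|exact: measurable_cst].
  exists ((h * w i 0) ^+ 2) => x; rewrite edge_domE => /andP[x_ge0 x_le].
  by rewrite mxE !exprMn ler_wpM2r ?sqr_ge0 // ler_sqr.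
- by apply: L2_bounded => // i; exists (w i 0 ^+ 2).
- move=> x /andP[x_ge0 _] i.
  by rewrite Rintegral_cst_itv // !mxE mul0r add0r mulrC.
Qed.

Definition step_test (t : R) (i : 'I_3) (s : R) : 'cV[R]_3 :=
  (\1_(`[0, t]%classic) s : R) *: delta_mx i 0.

Lemma step_test_L2 t i : L2 h (step_test t i).
Proof.
apply: L2_bounded => j.
  apply: (eq_measurable_fun (fun s => (\1_(`[0, t]%classic) s : R) * delta_mx i 0 j 0)).
    by move=> x _; rewrite [RHS]mxE.
  apply: measurable_realfun.measurable_funM; last exact: measurable_cst.
  by apply: measurable_realfun.measurable_indic; exact: measurable_itv.
exists 1 => x _; rewrite !mxE indicE.
by case: (x \in _); case: (_ && _); rewrite /= ?mulr1 ?mulr0 ?expr0n ?expr1n.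
Qed.

Lemma ip_step_test t i (f : R -> 'cV[R]_3) : 0 <= t <= h ->
  ip h f (step_test t i) = \int[mu]_(s in `[0, t]%classic) f s i 0.
Proof.
move=> /andP[t_ge0 t_le]; rewrite /ip /step_test.
under eq_Rintegral do rewrite dotvZr dotv_delta.
have dom_t : edge_dom h `&` `[0, t]%classic = `[0, t]%classic.
  rewrite setIidr // => x; rewrite /= in_itv edge_domE /= => /andP[-> x_le] /=.
  exact: le_trans t_le.
rewrite -[in RHS]dom_t Rintegral_mkcondr; apply: eq_Rintegral => s _.
by rewrite patch_indic mulrC.
Qed.

End TestFunctions.

Section EdgeInnerProduct.
Context {R : realType}.
Local Notation mu := (@lebesgue_measure R).
Variable h : R.
Implicit Types (f g : R -> 'cV[R]_3).

Lemma ipC f g : ip h f g = ip h g f.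
Proof. by rewrite /ip; under eq_Rintegral do rewrite dotvC. Qed.

Lemma ip_eq0 f g : (forall x, edge_dom h x -> dotv (f x) (g x) = 0) -> ip h f g = 0.
Proof.
move=> fg0; rewrite /ip (@eq_Rintegral _ _ _ mu _ (fun _ => 0)); last by move=> x /set_mem /fg0.
by rewrite /Rintegral integral0.
Qed.

Lemma ip0l g : ip h (fun _ => 0) g = 0.
Proof. by apply: ip_eq0 => x _; rewrite dotv0l. Qed.

Lemma ip_crossv_swap (d : 'cV[R]_3) f g :
  ip h (fun x => crossv d (f x)) g = - ip h (fun x => crossv d (g x)) f.
Proof. by rewrite /ip -RintegralN; apply: eq_Rintegral => x _; rewrite dotv_crossv_swap. Qed.

Variables (C : R -> 'M[R]_3) (a b : R).
Hypotheses (a_gt0 : 0 < a) (b_gt0 : 0 < b).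
Hypothesis C_coer : forall x, 0 <= x <= h -> coercive a b (C x).

Lemma ip_invmx_sym f g :
  ip h (fun x => invmx (C x) *m f x) g = ip h (fun x => invmx (C x) *m g x) f.
Proof.
apply: eq_Rintegral => x; rewrite inE edge_domE => /C_coer [C_sym _].
by rewrite dotv_mulmx trmx_inv C_sym dotvC.
Qed.

Lemma invmx_coef_bounds x xi : edge_dom h x ->
  b^-1 * dotv xi xi <= dotv (invmx (C x) *m xi) xi <= a^-1 * dotv xi xi.
Proof. by rewrite edge_domE => /C_coer/(coercive_invmx a_gt0 b_gt0) [_]. Qed.

Lemma ip_invmx_ge0 f : 0 <= ip h (fun x => invmx (C x) *m f x) f.
Proof.
apply: Rintegral_ge0 => x Dx; have /andP[+ _] := invmx_coef_bounds (f x) Dx.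
by apply: le_trans; rewrite mulr_ge0 ?dotv_ge0 // invr_ge0 ltW.
Qed.

Lemma ip_invmx_eq0_cst f (v : 'cV[R]_3) : 0 < h ->
  (forall x, edge_dom h x -> f x = v) ->
  ip h (fun x => invmx (C x) *m f x) f = 0 -> v = 0.
Proof.
move=> h_gt0 fv f_energy0; apply/eqP; rewrite -dotv_eq0 eq_le dotv_ge0 andbT.
have int_v : \int[mu]_(x in `[0, h]%classic) dotv (invmx (C x) *m v) v = 0.
  by rewrite -[RHS]f_energy0; apply: eq_Rintegral => x /set_mem /fv ->.
have := @Rintegral_itv_ge R h (b^-1 * dotv v v) (a^-1 * dotv v v)
  (fun x => dotv (invmx (C x) *m v) v) (ltW h_gt0).
rewrite int_v pmulr_lle0 // pmulr_rle0 ?invr_gt0 //; apply.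
- by rewrite mulr_ge0 ?dotv_ge0 // invr_ge0 ltW.
- exact: (fun x => @invmx_coef_bounds x v).
Qed.

End EdgeInnerProduct.

Section HomogeneousLocalSolution.
Context {R : realType}.
Local Notation mu := (@lebesgue_measure R).
Variables (h : R) (dir : 'cV[R]_3) (Cn Cm : R -> 'M[R]_3).
Hypothesis h_gt0 : 0 < h.

Local Notation solves ua ub ra rb u r n m dn dm :=
  (local_solution h dir Cn Cm ua ub ra rb (fun _ => 0) (fun _ => 0) u r n m dn dm).

Section OneSolution.
Variables (ua ub ra rb : 'cV[R]_3) (u r n m dn dm : R -> 'cV[R]_3).
Hypothesis sol : solves ua ub ra rb u r n m dn dm.

Lemma solution_n_cst t : 0 <= t <= h -> n t = n 0.
Proof.
move: sol => [[_ _ [_ [_ n_int]] _]] [_ _ dn_eq _] t_dom.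
apply/matrixP => i j; rewrite (ord1 j) n_int //.
have := dn_eq _ (step_test_L2 (ltW h_gt0) t i).
by rewrite ip_step_test // ip0l => ->; rewrite addr0.
Qed.

Lemma solution_m_affine t : 0 <= t <= h -> m t = m 0 - t *: crossv dir (n 0).
Proof.
move: sol => [[_ _ _ [_ [_ m_int]]]] [_ _ _ dm_eq] t_dom.
apply/matrixP => i j; rewrite (ord1 j) m_int // !mxE.
have := dm_eq _ (step_test_L2 (ltW h_gt0) t i).
rewrite ip0l !ip_step_test //.
rewrite (@eq_Rintegral _ _ _ mu _ (fun _ => crossv dir (n 0) i 0)); last first.
  move=> s; rewrite inE /= in_itv /= => /andP[s_ge0 s_le].
  by rewrite solution_n_cst // s_ge0 (le_trans s_le) //; case/andP: t_dom.
rewrite Rintegral_cst_itv ?mxE; [lra | by case/andP: t_dom].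
Qed.

Lemma solution_rot_eq : (forall x, edge_dom h x -> m x = 0) -> ra = rb.
Proof.
move: sol => [[_ _ _ _]] [_ m_eq _ _] m0.
have := m_eq _ _ (H1_cst (ltW h_gt0) (rb - ra)).
rewrite ip_eq0 => [|x /m0 ->]; last by rewrite mulmx0 dotv0l.
rewrite ip_eq0 => [|x _]; last by rewrite dotv0r.
rewrite /bnd oppr0 addr0 addrC -dotvBl => /esym/eqP.
by rewrite dotv_eq0 subr_eq0 => /eqP.
Qed.

Lemma solution_disp_eq : ra = 0 -> rb = 0 ->
  (forall x, edge_dom h x -> n x = 0) -> (forall x, edge_dom h x -> m x = 0) -> ua = ub.
Proof.
move: sol => [[_ _ _ _]] [n_eq m_eq _ _] ra0 rb0 n0 m0.
set c := ub - ua.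
(* test the second equation with [x *: (d x c)], then the first with the constant [c] *)
have r_perp : ip h r (fun _ => crossv dir c) = 0.
  have := m_eq _ _ (H1_linear (ltW h_gt0) (crossv dir c)).
  rewrite ip_eq0 => [|x /m0 ->]; last by rewrite mulmx0 dotv0l.
  by rewrite /bnd ra0 rb0 !dotv0l oppr0 !add0r.
have := n_eq _ _ (H1_cst (ltW h_gt0) c).
rewrite ip_eq0 => [|x /n0 ->]; last by rewrite mulmx0 dotv0l.
rewrite ip_eq0 => [|x _]; last by rewrite dotv0r.
rewrite ip_crossv_swap ipC r_perp /bnd oppr0 subr0 addr0 addrC -dotvBl -/c.
by move=> /esym/eqP; rewrite dotv_eq0 subr_eq0 => /eqP.
Qed.

Variables (an bn am bm : R).
Hypotheses (an_gt0 : 0 < an) (bn_gt0 : 0 < bn) (am_gt0 : 0 < am) (bm_gt0 : 0 < bm).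
Hypothesis Cn_coer : forall x, 0 <= x <= h -> coercive an bn (Cn x).
Hypothesis Cm_coer : forall x, 0 <= x <= h -> coercive am bm (Cm x).

Lemma solution_energy0 :
  ip h (fun x => invmx (Cn x) *m n x) n = 0 -> ip h (fun x => invmx (Cm x) *m m x) m = 0 ->
  (forall x, edge_dom h x -> n x = 0) /\ (forall x, edge_dom h x -> m x = 0).
Proof.
move=> n_energy0 m_energy0.
have n_cst x : edge_dom h x -> n x = n 0 by rewrite edge_domE => /solution_n_cst.
have n00 := ip_invmx_eq0_cst an_gt0 bn_gt0 Cn_coer h_gt0 n_cst n_energy0.
have m_cst x : edge_dom h x -> m x = m 0.
  by rewrite edge_domE => /solution_m_affine ->; rewrite n00 crossvr0 scaler0 subr0.
have m00 := ip_invmx_eq0_cst am_gt0 bm_gt0 Cm_coer h_gt0 m_cst m_energy0.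
by split=> x; [move/n_cst -> | move/m_cst ->].
Qed.

End OneSolution.

(* Green's formula: test the equations of the first solution with the fluxes of the second *)
Lemma solution_energy ua ub ra rb u r n m dn dm ua' ub' ra' rb' u' r' n' m' dn' dm' :
  solves ua ub ra rb u r n m dn dm -> solves ua' ub' ra' rb' u' r' n' m' dn' dm' ->
  - ip h (fun x => invmx (Cn x) *m n x) n' - ip h (fun x => invmx (Cm x) *m m x) m'
  = bnd h ua ub n' + bnd h ra rb m'.
Proof.
move=> [[u_L2 r_L2 _ _]] [n_eq m_eq _ _] [[_ _ n'_H1 m'_H1]] [_ _ dn'_eq dm'_eq].
have u_dn' : ip h u dn' = 0 by rewrite ipC dn'_eq // ip0l.
have r_dm' : ip h r dm' = ip h (fun x => crossv dir (r x)) n'.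
  by have := dm'_eq _ r_L2; rewrite ip0l ip_crossv_swap (ipC h r); lra.
rewrite -(n_eq _ _ n'_H1) -(m_eq _ _ m'_H1) u_dn' r_dm'; ring.
Qed.

End HomogeneousLocalSolution.

Section RowLaxMilgram.
Variables (R : numFieldType) (n : nat).
Implicit Types (x y z : 'rV[R]_n).

Lemma linear_row_expand (F : 'rV[R]_n -> R) :
  (forall a y z, F (a *: y + z) = a * F y + F z) ->
  forall y, F y = \sum_j y 0 j * F (delta_mx 0 j).
Proof.
move=> F_lin y.
have F0 : F 0 = 0 by have := F_lin (-1) 0 0; rewrite scaler0 addr0 mulN1r addNr.
have FD y1 y2 : F (y1 + y2) = F y1 + F y2 by rewrite -{1}[y1]scale1r F_lin mul1r.
rewrite {1}[y]row_sum_delta (big_morph F FD F0); apply: eq_bigr => j _.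
by rewrite -[_ *: _]addr0 F_lin F0 addr0.
Qed.

Variable B : 'rV[R]_n -> 'rV[R]_n -> R.
Hypothesis B_linear : forall x a y z, B x (a *: y + z) = a * B x y + B x z.
Hypothesis B_sym : forall x y, B x y = B y x.
Hypothesis B_pos : forall x, x != 0 -> 0 < B x x.

Definition gram : 'M[R]_n := \matrix_(i, j) B (delta_mx 0 i) (delta_mx 0 j).

Lemma mul_gram x : x *m gram = \row_j B x (delta_mx 0 j).
Proof.
apply/rowP => j; rewrite !mxE B_sym (linear_row_expand (B_linear _) x).
by apply: eq_bigr => i _; rewrite mxE B_sym.
Qed.

Lemma gram_unit : gram \in unitmx.
Proof.
rewrite unitmxE unitfE; apply/negP => /det0P [x /B_pos + x_gram].
rewrite (linear_row_expand (B_linear _) x) big1 ?ltxx // => j _.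
by have /rowP/(_ j) := x_gram; rewrite mul_gram !mxE => ->; rewrite mulr0.
Qed.

Lemma row_lax_milgram (F : 'rV[R]_n -> R) :
  (forall a y z, F (a *: y + z) = a * F y + F z) ->
  exists x, forall y, B x y = F y.
Proof.
move=> F_lin; exists ((\row_j F (delta_mx 0 j)) *m invmx gram) => y.
rewrite (linear_row_expand (B_linear _) y) (linear_row_expand F_lin y).
apply: eq_bigr => j _; congr (_ * _).
by have /rowP/(_ j) := mulmxKV gram_unit (\row_j F (delta_mx 0 j)); rewrite mul_gram !mxE.
Qed.

End RowLaxMilgram.

Section NodalCoordinates.
Variables (R : realType) (nN : nat) (ND : {set 'I_nN}).
Local Notation fT := ('I_nN -> 'cV[R]_3).

(* a coordinate of a pair of nodal fields is a free node, a component and the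
   field it belongs to ([false] for the first field, [true] for the second) *)
Definition free_dof := {k : 'I_nN * 'I_3 * bool | k.1.1 \notin ND}.
Local Notation dim := #|{: free_dof}|.

Definition of_coords (b : bool) (c : 'rV[R]_dim) : fT := fun nd =>
  \col_i oapp (fun k => c 0 (enum_rank k)) 0 (insub (nd, i, b) : option free_dof).

Definition coords (lam phi : fT) : 'rV[R]_dim :=
  \row_j let k := val (enum_val j) in (if k.2 then phi else lam) k.1.1 k.1.2 0.

Lemma of_coords_inVl b c : inVl ND (of_coords b c).
Proof. by move=> nd nd_ND; apply/matrixP => i j; rewrite !mxE insubN ?negbK. Qed.

Lemma of_coords_linear b a c d :
  of_coords b (a *: c + d) = (fun nd => a *: of_coords b c nd + of_coords b d nd).
Proof.
apply: funext => nd; apply/matrixP => i j; rewrite !mxE.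
by case: insub => [k|] /=; rewrite ?mxE ?mulr0 ?addr0.
Qed.

Lemma of_coordsK lam phi : inVl ND lam -> inVl ND phi ->
  forall b, of_coords b (coords lam phi) = if b then phi else lam.
Proof.
move=> lam_V phi_V b; apply: funext => nd; apply/matrixP => i j; rewrite (ord1 j) !mxE.
case: insubP => [k _ k_val|] /=; first by rewrite mxE enum_rankK k_val; case: (b).
by rewrite negbK => nd_ND; case: (b); rewrite ?lam_V ?phi_V // mxE.
Qed.

Lemma coordsK c : coords (of_coords false c) (of_coords true c) = c.
Proof.
apply/rowP => j; rewrite mxE /= -[in RHS](enum_valK j); move: (enum_val j) => k.
have -> : (if (val k).2 then of_coords true c else of_coords false c) =
  of_coords (val k).2 c by case: (val k).2.
by rewrite mxE -!surjective_pairing valK.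
Qed.

End NodalCoordinates.

Section SymmetricPositiveForm.
Variables (R : realType) (nN : nat) (ND : {set 'I_nN}).
Local Notation fT := ('I_nN -> 'cV[R]_3).
Local Notation comb a x y := (fun nd => a *: x nd + y nd).
Variable A : fT -> fT -> fT -> fT -> R.
Hypothesis A_linear : forall lam phi (a : R) mu1 psi1 mu2 psi2,
  A lam phi (comb a mu1 mu2) (comb a psi1 psi2) = a * A lam phi mu1 psi1 + A lam phi mu2 psi2.
Hypothesis A_sym : forall lam phi mu psi,
  inVl ND lam -> inVl ND phi -> inVl ND mu -> inVl ND psi ->
  A lam phi mu psi = A mu psi lam phi.
Hypothesis A_pos : forall lam phi, inVl ND lam -> inVl ND phi ->
  (exists nd, lam nd != 0 \/ phi nd != 0) -> 0 < A lam phi lam phi.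

Local Notation coordinates := 'rV[R]_#|{: free_dof ND}|.
Local Notation represents F lam phi :=
  (forall mu psi, inVl ND mu -> inVl ND psi -> A lam phi mu psi = F mu psi).

Lemma inVl_comb a (x y : fT) : inVl ND x -> inVl ND y -> inVl ND (comb a x y).
Proof. by move=> x_V y_V nd nd_ND; rewrite x_V // y_V // scaler0 addr0. Qed.

Lemma form_eq0 lam phi : inVl ND lam -> inVl ND phi ->
  A lam phi lam phi = 0 -> lam = (fun _ => 0) /\ phi = (fun _ => 0).
Proof.
move=> lam_V phi_V A0; split; apply: funext => nd; apply/eqP; apply: contraT => nz.
- by have := A_pos lam_V phi_V (ex_intro _ nd (or_introl nz)); rewrite A0 ltxx.
- by have := A_pos lam_V phi_V (ex_intro _ nd (or_intror nz)); rewrite A0 ltxx.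
Qed.

Lemma form_representation_unique F lam phi lam' phi' :
  inVl ND lam -> inVl ND phi -> inVl ND lam' -> inVl ND phi' ->
  represents F lam phi -> represents F lam' phi' -> lam' = lam /\ phi' = phi.
Proof.
move=> lam_V phi_V lam'_V phi'_V F_lam F_lam'.
set z1 := comb (-1) lam lam'; set z2 := comb (-1) phi phi'.
have z1_V : inVl ND z1 by apply: inVl_comb.
have z2_V : inVl ND z2 by apply: inVl_comb.
have A_z mu psi : inVl ND mu -> inVl ND psi -> A mu psi z1 z2 = 0.
  move=> mu_V psi_V; rewrite A_linear -(A_sym lam_V phi_V mu_V psi_V).
  by rewrite -(A_sym lam'_V phi'_V mu_V psi_V) F_lam // F_lam' // mulN1r addNr.
have [] := form_eq0 z1_V z2_V (A_z _ _ z1_V z2_V).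
move=> z10 z20; split; apply: funext => nd.
- by have /= := congr1 (fun f => f nd) z10; rewrite /z1 scaleN1r addrC => /subr0_eq.
- by have /= := congr1 (fun f => f nd) z20; rewrite /z2 scaleN1r addrC => /subr0_eq.
Qed.

Lemma form_representation_exists (F : fT -> fT -> R) :
  (forall a mu1 psi1 mu2 psi2, inVl ND mu1 -> inVl ND psi1 -> inVl ND mu2 -> inVl ND psi2 ->
     F (comb a mu1 mu2) (comb a psi1 psi2) = a * F mu1 psi1 + F mu2 psi2) ->
  exists lam phi, [/\ inVl ND lam, inVl ND phi & represents F lam phi].
Proof.
move=> F_lin.
pose B (c d : coordinates) :=
  A (of_coords false c) (of_coords true c) (of_coords false d) (of_coords true d).
have B_linear c a d1 d2 : B c (a *: d1 + d2) = a * B c d1 + B c d2.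
  by rewrite /B !of_coords_linear A_linear.
have B_sym c d : B c d = B d c by apply: A_sym; exact: of_coords_inVl.
have B_pos c : c != 0 -> 0 < B c c.
  move=> c_neq0; apply: A_pos; try exact: of_coords_inVl.
  move: c_neq0; apply: contraNP => no_nz.
  have coords0 b : of_coords b c = (fun _ => 0).
    apply: funext => nd; apply/eqP; apply: contraT => nz; case: no_nz.
    by exists nd; case: b nz; [right|left].
  rewrite -(coordsK c) !coords0; apply/eqP/rowP => j.
  by rewrite !mxE /=; case: ifP; rewrite mxE.
pose G (d : coordinates) := F (of_coords false d) (of_coords true d).
have G_linear a d1 d2 : G (a *: d1 + d2) = a * G d1 + G d2.
  by rewrite /G !of_coords_linear F_lin //; exact: of_coords_inVl.
have [c Bc] := row_lax_milgram B_linear B_sym B_pos G_linear.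
exists (of_coords false c), (of_coords true c); split; try exact: of_coords_inVl.
move=> mu psi mu_V psi_V.
by have := Bc (coords ND mu psi); rewrite /B /G !(of_coordsK mu_V psi_V).
Qed.

End SymmetricPositiveForm.

Section GraphSums.
Context {R : realType} {nN : nat} {E : finType} (ea eb : E -> 'I_nN).

Lemma sum_over_endpoint (f : E -> 'I_nN) (F : E -> 'I_nN -> R) :
  \sum_nd \sum_(e | f e == nd) F e nd = \sum_e F e (f e).
Proof.
rewrite (partition_big f predT) //=; apply: eq_bigr => nd _.
by apply: eq_bigr => e /eqP ->.
Qed.

Lemma sum_dotv_jump (h : E -> R) (q : E -> R -> 'cV[R]_3) (mu : 'I_nN -> 'cV[R]_3) :
  \sum_nd dotv (jump ea eb h q nd) (mu nd) = \sum_e bnd (h e) (mu (ea e)) (mu (eb e)) (q e).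
Proof.
under eq_bigr do rewrite dotvDl !dotv_suml.
rewrite big_split /= !(sum_over_endpoint _ (fun e nd => dotv _ (mu nd))) -big_split /=.
by apply: eq_bigr => e _; rewrite /bnd dotvNl !(dotvC (mu _)).
Qed.

Lemma connected_edge_cst (T : eqType) (f : 'I_nN -> T) :
  graph_connected ea eb -> (forall e, f (ea e) = f (eb e)) -> forall x y, f x = f y.
Proof.
move=> conn f_edge x y.
have f_closed : fingraph.closed (Defs.adjacent ea eb) [pred z | f z == f x].
  by move=> u v /existsP [e /orP[] /andP[/eqP <- /eqP <-]]; rewrite !inE f_edge.
by have := closed_connect f_closed (conn x y); rewrite !inE eqxx => /esym/eqP.
Qed.

End GraphSums.

Section EnergyForm.
Context {R : realType} {nN : nat} {E : finType}.
Variables (pos : 'I_nN -> 'cV[R]_3) (ea eb : E -> 'I_nN) (ND : {set 'I_nN}) (N M : edge_op R E).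
Local Notation hl := (edge_len pos ea eb).
Local Notation A := (Aform pos ea eb ND N M).
Local Notation comb a x y := (fun nd => a *: x nd + y nd).

Lemma Aform_linear lam phi (a : R) mu1 psi1 mu2 psi2 :
  A lam phi (comb a mu1 mu2) (comb a psi1 psi2) = a * A lam phi mu1 psi1 + A lam phi mu2 psi2.
Proof.
rewrite /Aform mulrN -opprD mulr_sumr -big_split; congr (- _); apply: eq_bigr => nd _.
by rewrite !dotvDr !dotvZr /=; ring.
Qed.

Lemma Aform_edge_sum lam phi mu psi : inVl ND mu -> inVl ND psi ->
  A lam phi mu psi =
  - \sum_e (bnd (hl e) (mu (ea e)) (mu (eb e)) (at_edge ea eb N lam phi e)
          + bnd (hl e) (psi (ea e)) (psi (eb e)) (at_edge ea eb M lam phi e)).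
Proof.
move=> mu_V psi_V; rewrite /Aform big_mkcond /= big_split /= -!sum_dotv_jump -big_split /=.
congr (- _); apply: eq_bigr => nd _; case: ifPn => // /negPn nd_ND.
by rewrite mu_V // psi_V // !dotv0r addr0.
Qed.

Variables (Cn Cm : E -> R -> 'M[R]_3) (an bn am bm : R).
Hypotheses (pos_inj : injective pos) (ea_lt_eb : forall e, (val (ea e) < val (eb e))%N).
Hypotheses (an_gt0 : 0 < an) (bn_gt0 : 0 < bn) (am_gt0 : 0 < am) (bm_gt0 : 0 < bm).
Hypothesis Cn_coer : forall e x, 0 <= x <= hl e -> coercive an bn (Cn e x).
Hypothesis Cm_coer : forall e x, 0 <= x <= hl e -> coercive am bm (Cm e x).
Hypothesis NM_solve : forall e ua ub ra rb, exists u r dn dm : R -> 'cV[R]_3,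
  local_solution (hl e) (edge_dir pos ea eb e) (Cn e) (Cm e)
    ua ub ra rb (fun _ => 0) (fun _ => 0) u r (N e ua ub ra rb) (M e ua ub ra rb) dn dm.

Local Notation energy_n e lam phi mu psi :=
  (ip (hl e) (fun x => invmx (Cn e x) *m at_edge ea eb N lam phi e x)
     (at_edge ea eb N mu psi e)).
Local Notation energy_m e lam phi mu psi :=
  (ip (hl e) (fun x => invmx (Cm e x) *m at_edge ea eb M lam phi e x)
     (at_edge ea eb M mu psi e)).

Lemma edge_len_gt0 e : 0 < hl e.
Proof.
rewrite sqrtr_gt0 dotv_gt0 subr_eq0; apply: contraTneq (ea_lt_eb e) => /pos_inj ->.
by rewrite ltnn.
Qed.

Lemma Aform_energy lam phi mu psi : inVl ND mu -> inVl ND psi ->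
  A lam phi mu psi = \sum_e (energy_n e lam phi mu psi + energy_m e lam phi mu psi).
Proof.
move=> mu_V psi_V; rewrite Aform_edge_sum // -sumrN; apply: eq_bigr => e _.
have [u [r [dn [dm sol]]]] := NM_solve e (lam (ea e)) (lam (eb e)) (phi (ea e)) (phi (eb e)).
have [u' [r' [dn' [dm' sol']]]] := NM_solve e (mu (ea e)) (mu (eb e)) (psi (ea e)) (psi (eb e)).
rewrite -(solution_energy sol' sol) opprB opprK addrC.
by congr (_ + _); apply: ip_invmx_sym; [exact: Cn_coer | exact: Cm_coer].
Qed.

Lemma Aform_sym lam phi mu psi :
  inVl ND lam -> inVl ND phi -> inVl ND mu -> inVl ND psi ->
  A lam phi mu psi = A mu psi lam phi.
Proof.
move=> lam_V phi_V mu_V psi_V; rewrite !Aform_energy //; apply: eq_bigr => e _.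
by congr (_ + _); apply: ip_invmx_sym; [exact: Cn_coer | exact: Cm_coer].
Qed.

Lemma edge_energy_ge0 e lam phi : 0 <= energy_n e lam phi lam phi + energy_m e lam phi lam phi.
Proof.
by rewrite addr_ge0 // (ip_invmx_ge0 an_gt0 bn_gt0 (@Cn_coer e),
  ip_invmx_ge0 am_gt0 bm_gt0 (@Cm_coer e)).
Qed.

Lemma edge_energy0_rigid e lam phi :
  energy_n e lam phi lam phi + energy_m e lam phi lam phi = 0 ->
  phi (ea e) = phi (eb e) /\ (phi (ea e) = 0 -> phi (eb e) = 0 -> lam (ea e) = lam (eb e)).
Proof.
move=> /eqP; rewrite paddr_eq0 ?(ip_invmx_ge0 an_gt0 bn_gt0 (@Cn_coer e))
  ?(ip_invmx_ge0 am_gt0 bm_gt0 (@Cm_coer e)) //.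
move=> /andP[/eqP n_energy0 /eqP m_energy0].
have [u [r [dn [dm sol]]]] := NM_solve e (lam (ea e)) (lam (eb e)) (phi (ea e)) (phi (eb e)).
have [n0 m0] := solution_energy0 (edge_len_gt0 e) sol an_gt0 bn_gt0 am_gt0 bm_gt0
  (@Cn_coer e) (@Cm_coer e) n_energy0 m_energy0.
split; first exact: (solution_rot_eq (edge_len_gt0 e) sol m0).
by move=> phi_a0 phi_b0; exact: (solution_disp_eq (edge_len_gt0 e) sol phi_a0 phi_b0 n0 m0).
Qed.

Lemma Aform_pos lam phi : ND != finset.set0 -> graph_connected ea eb ->
  inVl ND lam -> inVl ND phi ->
  (exists nd, lam nd != 0 \/ phi nd != 0) -> 0 < A lam phi lam phi.
Proof.
move=> /set0Pn [nd0 nd0_ND] conn lam_V phi_V [nd nz].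
rewrite lt_def Aform_energy // sumr_ge0 => [|e _]; last exact: edge_energy_ge0.
rewrite andbT; apply/eqP => /psumr_eq0P energy0.
have rigid e := edge_energy0_rigid (energy0 (fun e _ => edge_energy_ge0 e lam phi) e isT).
have phi0 x : phi x = 0.
  by rewrite (connected_edge_cst conn (fun e => (rigid e).1) x nd0) phi_V.
have lam0 x : lam x = 0.
  have lam_edge e : lam (ea e) = lam (eb e) by apply: (rigid e).2.
  by rewrite (connected_edge_cst conn lam_edge x nd0) lam_V.
by case: nz; rewrite ?lam0 ?phi0 eqxx.
Qed.

End EnergyForm.

Theorem lemma3p3 (R : realType) (nN : nat) (E : finType)
  (pos : 'I_nN -> 'cV[R]_3) (ea eb : E -> 'I_nN)
  (Cn Cm : E -> R -> 'M[R]_3) (alpha_n beta_n alpha_m beta_m : R)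
  (ND : {set 'I_nN}) (N M : edge_op R E) :
  injective pos ->
  (forall e, (val (ea e) < val (eb e))%N) ->
  injective (fun e => (ea e, eb e)) ->
  graph_connected ea eb ->
  0 < alpha_n -> 0 < beta_n -> 0 < alpha_m -> 0 < beta_m ->
  (forall e (i j : 'I_3),
     measurable_fun (edge_dom (edge_len pos ea eb e)) (fun x => Cn e x i j) /\
     measurable_fun (edge_dom (edge_len pos ea eb e)) (fun x => Cm e x i j)) ->
  (forall e x, 0 <= x <= edge_len pos ea eb e ->
     [/\ (Cn e x)^T = Cn e x, (Cm e x)^T = Cm e x,
      forall xi : 'cV[R]_3,
        alpha_n * dotv xi xi <= dotv (Cn e x *m xi) xi <= beta_n * dotv xi xi &
      forall xi : 'cV[R]_3,
        alpha_m * dotv xi xi <= dotv (Cm e x *m xi) xi <= beta_m * dotv xi xi]) ->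
  ND != finset.set0 ->
  (* N e, M e are the n_e, m_e components of the local solver with f = g = 0 *)
  (forall e ua ub ra rb, exists u r dn dm : R -> 'cV[R]_3,
     local_solution (edge_len pos ea eb e) (edge_dir pos ea eb e) (Cn e) (Cm e)
       ua ub ra rb (fun _ => 0) (fun _ => 0)
       u r (N e ua ub ra rb) (M e ua ub ra rb) dn dm) ->
  let A := Aform pos ea eb ND N M in
  [/\
   (* the energy identity *)
   (forall lam phi mu psi, inVl ND lam -> inVl ND phi -> inVl ND mu -> inVl ND psi ->
      A lam phi mu psi =
      \sum_(e : E)
        (ip (edge_len pos ea eb e)
            (fun x => invmx (Cn e x) *m at_edge ea eb N lam phi e x)
            (at_edge ea eb N mu psi e)
       + ip (edge_len pos ea eb e)
            (fun x => invmx (Cm e x) *m at_edge ea eb M lam phi e x)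
            (at_edge ea eb M mu psi e))),
   (* symmetry *)
   (forall lam phi mu psi, inVl ND lam -> inVl ND phi -> inVl ND mu -> inVl ND psi ->
      A lam phi mu psi = A mu psi lam phi),
   (* positive definiteness *)
   (forall lam phi, inVl ND lam -> inVl ND phi ->
      (exists nd, lam nd != 0 \/ phi nd != 0) -> 0 < A lam phi lam phi) &
   (* unique solvability for every linear functional F on V_lambda x V_lambda *)
   (forall F : ('I_nN -> 'cV[R]_3) -> ('I_nN -> 'cV[R]_3) -> R,
      (forall (a : R) mu1 psi1 mu2 psi2,
         inVl ND mu1 -> inVl ND psi1 -> inVl ND mu2 -> inVl ND psi2 ->
         F (fun nd => a *: mu1 nd + mu2 nd) (fun nd => a *: psi1 nd + psi2 nd)
         = a * F mu1 psi1 + F mu2 psi2) ->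
      exists lam phi, [/\ inVl ND lam, inVl ND phi,
        (forall mu psi, inVl ND mu -> inVl ND psi -> A lam phi mu psi = F mu psi) &
        (forall lam' phi', inVl ND lam' -> inVl ND phi' ->
           (forall mu psi, inVl ND mu -> inVl ND psi -> A lam' phi' mu psi = F mu psi) ->
           lam' = lam /\ phi' = phi)])].
Proof.
move=> pos_inj ea_lt_eb _ conn an_gt0 bn_gt0 am_gt0 bm_gt0 _ C_bnd ND_neq0 NM_solve A.
have Cn_coer e x : 0 <= x <= edge_len pos ea eb e -> coercive alpha_n beta_n (Cn e x).
  by case/C_bnd => Cn_sym _ Cn_bnd _; split.
have Cm_coer e x : 0 <= x <= edge_len pos ea eb e -> coercive alpha_m beta_m (Cm e x).
  by case/C_bnd => _ Cm_sym _ Cm_bnd; split.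
have A_lin := @Aform_linear _ _ _ pos ea eb ND N M.
have A_sym := Aform_sym (ND := ND) Cn_coer Cm_coer NM_solve.
have A_pos := Aform_pos pos_inj ea_lt_eb an_gt0 bn_gt0 am_gt0 bm_gt0
  Cn_coer Cm_coer NM_solve ND_neq0 conn.
split=> [lam phi mu psi _ _ | | | F F_lin].
- exact: (Aform_energy Cn_coer Cm_coer NM_solve).
- exact: A_sym.
- exact: A_pos.
- have [lam [phi [lam_V phi_V F_rep]]] := form_representation_exists A_lin A_sym A_pos F_lin.
  exists lam, phi; split => // lam' phi' lam'_V phi'_V.
  exact: (form_representation_unique A_lin A_sym A_pos lam_V phi_V lam'_V phi'_V F_rep).
Qed.
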